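(* For any lattice $L\subseteq\mathbb{R}^m$, if $C$ is a lattice code in $\mathbb{R}^m/L$, then $|C|\in N(L):=\{\|z\|_2^m:z\in\overline{L}\setminus\{0\}\}$.
   Context: A lattice is a discrete full-rank subgroup of $\mathbb{R}^m$; $\ell(L)$ is the smallest Euclidean norm of a nonzero vector of $L$ and $\overline{L}:=\ell(L)^{-1}\cdot L$. $\operatorname{CO}(m):=\{cQ:c>0,Q\in\operatorname{O}(m)\}$. A lattice code in $\mathbb{R}^m/L$ is a set $(TL)/L$ where $T\in\operatorname{CO}(m)$ is such that $L\subseteq TL$. *)

From HB Require Import structures.
From mathcomp Require Import all_boot all_order all_algebra.
From mathcomp Require Import all_classical all_reals.
Set Implicit Arguments. Unset Strict Implicit. Unset Printing Implicit Defensive.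
Import Order.TTheory GRing.Theory Num.Theory.
Local Open Scope classical_set_scope.
Local Open Scope ring_scope.

Definition norm2 {R : realType} {m : nat} (v : 'rV[R]_m) : R :=
  Num.sqrt (\sum_(i < m) v 0 i ^+ 2).

Definition is_lattice {R : realType} {m : nat} (L : set 'rV[R]_m) : Prop :=
  [/\ 0 \in L,
      (forall u v, u \in L -> v \in L -> u - v \in L),
      (exists2 r : R, 0 < r & forall v, v \in L -> norm2 v < r -> v = 0) &
      (exists B : 'M[R]_m, (forall i, row i B \in L) /\ B \in unitmx)].

Definition ell {R : realType} {m : nat} (L : set 'rV[R]_m) : R :=
  inf [set norm2 v | v in [set v | v \in L /\ v != 0]].

Definition Lbar {R : realType} {m : nat} (L : set 'rV[R]_m) : set 'rV[R]_m :=
  [set (ell L)^-1 *: v | v in L].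

Definition CO {R : realType} (m : nat) : set 'M[R]_m :=
  [set T | exists c : R, exists Q : 'M[R]_m,
     [/\ 0 < c, Q *m Q^T = 1%:M & T = c *: Q]].

Definition lin_image {R : realType} {m : nat} (T : 'M[R]_m) (L : set 'rV[R]_m)
  : set 'rV[R]_m := [set v *m T | v in L].

Definition quotient_set {R : realType} {m : nat} (M L : set 'rV[R]_m)
  : set (set 'rV[R]_m) := [set [set v + w | w in L] | v in M].

Definition lattice_code {R : realType} {m : nat} (L : set 'rV[R]_m)
  (C : set (set 'rV[R]_m)) : Prop :=
  exists2 T : 'M[R]_m, @CO R m T &
    L `<=` lin_image T L /\ C = quotient_set (lin_image T L) L.

Definition N_set {R : realType} {m : nat} (L : set 'rV[R]_m) : set R :=
  [set norm2 z ^+ m | z in [set z | z \in Lbar L /\ z != 0]].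

(* Discreteness bounds the denominators of the coordinates of L in a basis
   taken from L (pigeonhole on fractional parts, as in Dirichlet's
   approximation theorem), so L sits between two free groups and is finitely
   generated; the Smith normal form then yields a Z-basis W of L.  Now TL has
   basis WT and L <= TL means W = Y W T for an integer matrix Y, so, by the
   Smith normal form again, |TL / L| = |det Y| = |det T|^-1 = c^-m for
   T = cQ.  Finally, a shortest vector v of L is v = uT with u in L, and
   z = u / l(L) lies in Lbar with |z| = |u| / |v| = 1 / c. *)

From mathcomp Require Import all_boot all_order all_algebra.
From mathcomp Require Import all_classical all_reals.
From mathcomp Require Import zify ring lra.
Import Order.TTheory GRing.Theory Num.Theory.

Set Implicit Arguments. Unset Strict Implicit. Unset Printing Implicit Defensive.
Local Open Scope classical_set_scope.
Local Open Scope ring_scope.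

Definition addgroup {V : zmodType} (L : set V) : Prop :=
  0 \in L /\ forall u v, u \in L -> v \in L -> u - v \in L.

Section AddGroup.
Variables (V : zmodType) (L : set V).
Hypothesis gL : addgroup L.

Lemma addgroup0 : 0 \in L. Proof. by case: gL. Qed.

Lemma addgroupB u v : u \in L -> v \in L -> u - v \in L.
Proof. by case: gL => _; apply. Qed.

Lemma addgroupN u : u \in L -> - u \in L.
Proof. by rewrite -sub0r; apply/addgroupB/addgroup0. Qed.

Lemma addgroupD u v : u \in L -> v \in L -> u + v \in L.
Proof. by move=> Lu Lv; rewrite -[v]opprK; apply/addgroupB/addgroupN. Qed.

Lemma addgroupMz u z : u \in L -> u *~ z \in L.
Proof.
move=> Lu; have LMn n : u *+ n \in L.
  by elim: n => [|n IHn]; rewrite ?mulr0n ?addgroup0 // mulrS addgroupD.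
case: z => n; first exact: LMn.
by rewrite NegzE mulrNz; apply/addgroupN/LMn.
Qed.

Lemma addgroup_sum (I : finType) (F : I -> V) :
  (forall i, F i \in L) -> \sum_i F i \in L.
Proof.
by move=> LF; apply: (big_ind (fun v => v \in L)); [apply: addgroup0 | apply: addgroupD |].
Qed.

End AddGroup.

Lemma coset_eq (V : zmodType) (L : set V) v v' : addgroup L -> v - v' \in L ->
  [set v + w | w in L] = [set v' + w | w in L].
Proof.
move=> gL Lvv'; apply/seteqP; split => _ [w Lw <-].
  exists (v - v' + w); last by rewrite addrA (addrC v') subrK.
  by rewrite -in_setE addgroupD // in_setE.
exists (v' - v + w); last by rewrite addrA (addrC v) subrK.
have Lv'v : v' - v \in L by rewrite -opprB addgroupN.
by rewrite -in_setE addgroupD // in_setE.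
Qed.

Definition int_span {R : pzRingType} {k m : nat} (B : 'M[R]_(k, m)) : set 'rV[R]_m :=
  range (fun a : 'rV[int]_k => map_mx intr a *m B).

Lemma map_intr_mulmxA (R : pzRingType) p n k m (a : 'M[int]_(p, n)) (A : 'M[int]_(n, k))
    (G : 'M[R]_(k, m)) :
  map_mx intr a *m (map_mx intr A *m G) = map_mx intr (a *m A) *m G.
Proof. by rewrite map_mxM mulmxA. Qed.

Lemma int_span_addgroup (R : pzRingType) k m (B : 'M[R]_(k, m)) : addgroup (int_span B).
Proof.
split; first by rewrite in_setE; exists 0; rewrite ?raddf0 ?mul0mx.
move=> u v; rewrite !in_setE => -[a _ <-] [b _ <-].
by exists (a - b); rewrite ?raddfB ?mulmxBl.
Qed.

Lemma int_span_sub (R : pzRingType) k m (L : set 'rV[R]_m) (B : 'M[R]_(k, m)) :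
  addgroup L -> (forall i, row i B \in L) -> int_span B `<=` L.
Proof.
move=> gL LB _ [a _ <-]; rewrite -in_setE mulmx_sum_row.
by apply: addgroup_sum => // i; rewrite mxE scaler_int addgroupMz.
Qed.

Lemma int_span_row (R : pzRingType) k m (B : 'M[R]_(k, m)) i : int_span B (row i B).
Proof. by exists (delta_mx 0 i); rewrite // map_delta_mx -rowE. Qed.

Lemma int_span_rows (R : pzRingType) k n m (A : 'M[R]_(k, m)) (W : 'M[R]_(n, m)) :
  (forall i, int_span W (row i A)) -> exists Y : 'M[int]_(k, n), A = map_mx intr Y *m W.
Proof.
move=> spanA; have /fin_all_exists [Y eqY] : forall i, exists a : 'rV[int]_n,
    map_mx intr a *m W = row i A by move=> i; have [a _ <-] := spanA i; exists a.
exists (\matrix_i Y i); apply/row_matrixP => i.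
by rewrite row_mul -eqY; congr (_ *m _); apply/rowP => j; rewrite !mxE.
Qed.

Lemma lin_image_int_span (R : realType) m (T W : 'M[R]_m) :
  lin_image T (int_span W) = int_span (W *m T).
Proof.
apply/seteqP; split => [_ [_ [a _ <-] <-] | _ [a _ <-]]; first by exists a; rewrite ?mulmxA.
by exists (map_mx intr a *m W); [exists a | rewrite mulmxA].
Qed.

Definition residue_system m (Z : 'M[int]_m) n (rep : 'I_n -> 'rV[int]_m) : Prop :=
  (forall a, exists i b, a - rep i = b *m Z) /\
  (forall i j b, rep i - rep j = b *m Z -> i = j).

Lemma residue_system_diag m (d : 'rV[int]_m) : (forall i, d ord0 i != 0) ->
  exists n (rep : 'I_n -> 'rV[int]_m),
    n = (\prod_i absz (d ord0 i))%N /\ residue_system (diag_mx d) rep.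
Proof.
move=> d_neq0; pose T := {dffun forall i : 'I_m, 'I_(absz (d ord0 i))}.
pose rep (k : 'I_#|T|) : 'rV[int]_m := \row_i (enum_val k i : nat)%:Z.
exists #|T|, rep; split; last split.
- by rewrite card_dep_ffun foldrE big_map big_enum; apply: eq_bigr => i _; rewrite card_ord.
- move=> a; have mod_lt i : (absz (a ord0 i %% d ord0 i)%Z < absz (d ord0 i))%N.
    by rewrite -ltz_nat !abszE ger0_norm ?modz_ge0 ?ltz_mod.
  pose x : T := [ffun i => Ordinal (mod_lt i)].
  exists (enum_rank x), (\row_i (a ord0 i %/ d ord0 i)%Z); apply/rowP => j.
  rewrite mul_mx_diag !mxE enum_rankK ffunE /= gez0_abs ?modz_ge0 //.
  by rewrite {1}(divz_eq (a ord0 j) (d ord0 j)) addrK.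
- move=> i j b /rowP eq_ij; apply/enum_val_inj/ffunP => k; apply: val_inj.
  move: (eq_ij k); rewrite mul_mx_diag !mxE.
  case: (enum_val i k) (enum_val j k) => [u lt_u] [v lt_v] /=.
  move: lt_u lt_v; rewrite -!ltz_nat !abszE.
  move: (d ord0 k) (b ord0 k) => dk c lt_u lt_v eq_uv.
  suff c0 : c = 0 by move: eq_uv; rewrite c0 mul0r; lia.
  have : `|c| * `|dk| < `|dk| by rewrite -normrM -eq_uv; lia.
  nia.
Qed.

Lemma residue_system_mul m (P Z Q : 'M[int]_m) n (rep : 'I_n -> 'rV[int]_m) :
  P \in unitmx -> Q \in unitmx -> residue_system Z rep ->
  residue_system (P *m Z *m Q) (fun i => rep i *m Q).
Proof.
move=> uP uQ [rep_surj rep_inj]; split.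
- move=> a; have [i [b eq_b]] := rep_surj (a *m invmx Q).
  exists i, (b *m invmx P).
  by rewrite !mulmxA mulmxKV // -eq_b mulmxBl mulmxKV.
- move=> i j b eq_ij; apply: (rep_inj i j (b *m P)).
  by apply: (can_inj (mulmxK uQ)); rewrite mulmxBl eq_ij !mulmxA.
Qed.

Lemma residue_system_det m (Z : 'M[int]_m) : \det Z != 0 ->
  exists n (rep : 'I_n -> 'rV[int]_m), n = absz (\det Z) /\ residue_system Z rep.
Proof.
move=> detZ_neq0; have [P uP [Q uQ [d _ eqZ]]] := int_Smith_normal_form Z.
set D := \matrix_(i, j) _ in eqZ.
have eqD : D = diag_mx (\row_i d`_i) by apply/matrixP => i j; rewrite !mxE.
have unit_norm (U : 'M[int]_m) : U \in unitmx -> `|\det U| = 1.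
  by rewrite unitmxE => /orP[] /eqP ->.
have detZ : `|\det Z| = \prod_(i < m) `|d`_i|.
  rewrite eqZ eqD !det_mulmx det_diag !normrM !unit_norm // mul1r mulr1 normr_prod.
  by apply: eq_bigr => i _; rewrite mxE.
have [|n [rep [eq_n rep_sys]]] := residue_system_diag (d := \row_(i < m) d`_i).
  move=> i; rewrite mxE; apply: contra detZ_neq0 => /eqP di0.
  by rewrite -normr_eq0 detZ (bigD1 i) //= di0 normr0 mul0r.
exists n, (fun i => rep i *m Q); split; last by rewrite eqZ eqD; apply: residue_system_mul.
apply/eqP; rewrite -eqz_nat eq_n abszE detZ (big_morph Posz PoszM (erefl 1%:Z)).
by apply/eqP/eq_bigr => i _; rewrite mxE abszE.
Qed.

Lemma int_span_square (R : pzRingType) m k (K : 'M[int]_(m + k, m)) (G : 'M[R]_m) :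
  exists Z : 'M[int]_m, int_span (map_mx intr K *m G) = int_span (map_mx intr Z *m G).
Proof.
have [P uP [Q uQ [d _ eqK]]] := int_Smith_normal_form K.
pose D : 'M[int]_m := \matrix_(i, j) (d`_i *+ (i == j :> nat)).
have eqD : \matrix_(i < m + k, j < m) (d`_i *+ (i == j :> nat)) = col_mx D 0.
  apply/matrixP => i j; case: (split_ordP i) => i' ->; first by rewrite col_mxEu !mxE.
  rewrite col_mxEd !mxE; case: eqP => //= eq_ij.
  by have := ltn_ord j; rewrite -eq_ij ltnNge leq_addr.
rewrite {}eqD in eqK; exists (D *m Q).
apply/seteqP; split => _ [a _ <-]; rewrite map_intr_mulmxA.
- exists (lsubmx (a *m P)) => //; rewrite map_intr_mulmxA eqK !mulmxA.
  by rewrite -[a *m P]hsubmxK mul_row_col mulmx0 addr0 hsubmxK.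
- exists (row_mx a 0 *m invmx P) => //; rewrite map_intr_mulmxA eqK !mulmxA.
  by rewrite mulmxKV // mul_row_col mulmx0 addr0.
Qed.

Lemma int_span_index (R : realType) m (V : 'M[R]_m) (Y : 'M[int]_m) :
  V \in unitmx -> \det Y != 0 ->
  (quotient_set (int_span V) (int_span (map_mx intr Y *m V)) #= `I_(absz (\det Y)))%card.
Proof.
move=> uV detY_neq0; have [n [rep [<- [rep_surj rep_inj]]]] := residue_system_det detY_neq0.
set M := int_span (map_mx intr Y *m V); have gM : addgroup M := int_span_addgroup _.
pose coset i := [set map_mx intr (rep i) *m V + w | w in M].
have -> : quotient_set (int_span V) M = coset @` setT.
  apply/seteqP; split => [_ [_ [a _ <-] <-] | _ [i _ <-]]; last first.
    by exists (map_mx intr (rep i) *m V) => //; exists (rep i).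
  have [i [b eq_b]] := rep_surj a; exists i => //; apply: coset_eq => //.
  rewrite -mulmxBl -raddfB -opprB raddfN mulNmx addgroupN // eq_b -map_intr_mulmxA.
  by rewrite in_setE; exists b.
apply: card_eq_trans (inj_card_eq _) (card_esym card_II) => i j _ _ eq_ij.
have : coset i (map_mx intr (rep i) *m V) by exists 0; rewrite ?addr0 // -in_setE addgroup0.
rewrite eq_ij => -[_ [b _ <-]] eq_w; apply: (rep_inj i j b).
have : map_mx intr (rep i - rep j) *m V = map_mx intr (b *m Y) *m V.
  by rewrite raddfB mulmxBl -eq_w -map_intr_mulmxA addrAC subrr add0r.
move/(can_inj (mulmxK uV))/matrixP => eq_map.
by apply/matrixP => k l; move: (eq_map k l); rewrite !mxE => /intr_inj.
Qed.

Lemma int_span_index_mulmx (R : realType) m (W T : 'M[R]_m) :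
  W \in unitmx -> T \in unitmx -> int_span W `<=` int_span (W *m T) ->
  exists2 n : nat, (quotient_set (int_span (W *m T)) (int_span W) #= `I_n)%card
                 & n%:R * `|\det T| = 1.
Proof.
move=> uW uT subW; have [Y eqW] : exists Y : 'M[int]_m, W = map_mx intr Y *m (W *m T).
  by apply: int_span_rows => i; apply/subW/int_span_row.
have detYT : (\det Y)%:~R * \det T = 1 :> R.
  have detW_neq0 : \det W != 0 by rewrite -unitfE -unitmxE.
  have := congr1 determinant eqW; rewrite !det_mulmx det_map_mx => eq_detW.
  by apply: (mulIf detW_neq0); rewrite mul1r {2}eq_detW; ring.
have detY_neq0 : \det Y != 0.
  by apply: contra_eq_neq detYT => ->; rewrite mul0r eq_sym oner_neq0.
exists (absz (\det Y)); last by rewrite natr_absz intr_norm -normrM detYT normr1.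
rewrite [X in quotient_set _ (int_span X)]eqW.
by apply: int_span_index; rewrite // unitmx_mul uW.
Qed.

Lemma mulmx_entry_le (R : numDomainType) k n (d : 'rV[R]_k) (B : 'M[R]_(k, n)) e :
  (forall i, `|d 0 i| <= e) -> forall j, `|(d *m B) 0 j| <= e * \sum_i \sum_j `|B i j|.
Proof.
move=> le_d j; rewrite mxE mulr_sumr; apply: le_trans (ler_norm_sum _ _ _) _.
apply: ler_sum => i _; rewrite normrM.
have e_ge0 : 0 <= e := le_trans (normr_ge0 _) (le_d i).
apply: le_trans (_ : e * `|B i j| <= _); first by rewrite ler_wpM2r.
by rewrite ler_wpM2l // (bigD1 j) //= lerDl sumr_ge0.
Qed.

Section Norm2.
Variables (R : realType) (m : nat).
Implicit Types (v : 'rV[R]_m).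

Lemma coord_le_norm2 v j : `|v 0 j| <= norm2 v.
Proof.
rewrite -(sqrtr_sqr (v 0 j)) ler_sqrt ?sumr_ge0 // => [|i _]; last exact: sqr_ge0.
by rewrite (bigD1 j) //= lerDl sumr_ge0 // => i _; rewrite sqr_ge0.
Qed.

Lemma norm2_le_coord v b : (forall j, `|v 0 j| <= b) -> norm2 v <= m%:R * b.
Proof.
case: m v => [|m'] v le_v; first by rewrite /norm2 big_ord0 sqrtr0 mul0r.
have b_ge0 : 0 <= b := le_trans (normr_ge0 _) (le_v ord0).
rewrite -(ger0_norm (mulr_ge0 (ler0n _ _) b_ge0)) -sqrtr_sqr ler_sqrt ?sqr_ge0 //.
apply: le_trans (_ : \sum_(i < m'.+1) b ^+ 2 <= _).
  by apply: ler_sum => i _; rewrite -real_normK ?num_real // lerXn2r ?nnegrE.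
rewrite sumr_const card_ord -[_ *+ _]mulr_natl exprMn ler_wpM2r ?sqr_ge0 //.
by rewrite -natrX ler_nat; nia.
Qed.

Lemma norm2Z v (k : R) : norm2 (k *: v) = `|k| * norm2 v.
Proof.
rewrite /norm2 -sqrtr_sqr -sqrtrM ?sqr_ge0 // mulr_sumr.
by congr Num.sqrt; apply: eq_bigr => i _; rewrite mxE exprMn.
Qed.

Lemma norm2_orthogonal v (Q : 'M[R]_m) : Q *m Q^T = 1%:M -> norm2 (v *m Q) = norm2 v.
Proof.
have sum_sqr (w : 'rV[R]_m) : \sum_i w 0 i ^+ 2 = (w *m w^T) 0 0.
  by rewrite mxE; apply: eq_bigr => i _; rewrite mxE expr2.
by move=> QQT; rewrite /norm2 !sum_sqr trmx_mul mulmxA -(mulmxA v) QQT mulmx1.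
Qed.

Lemma norm2_gt0 v : v != 0 -> 0 < norm2 v.
Proof.
move=> v_neq0; have [j vj_neq0] : exists j, v 0 j != 0.
  apply/existsP; apply: contraR v_neq0 => /existsPn v0.
  by apply/eqP/rowP => j; rewrite mxE; apply/eqP/negPn.
by apply: lt_le_trans (coord_le_norm2 v j); rewrite normr_gt0.
Qed.

End Norm2.

Lemma frac_box_close (R : realType) (K : nat) (a b : R) : (0 < K)%N ->
  0 <= a < 1 -> 0 <= b < 1 ->
  Num.truncn (K%:R * a) = Num.truncn (K%:R * b) -> `|a - b| < K%:R^-1.
Proof.
move=> K_gt0 /andP[a_ge0 _] /andP[b_ge0 _] eq_box.
have K_pos : 0 < K%:R :> R by rewrite ltr0n.
have := truncn_itv (mulr_ge0 (ler0n R K) a_ge0).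
have := truncn_itv (mulr_ge0 (ler0n R K) b_ge0).
rewrite eq_box -natr1; move: (Num.truncn _) => t /andP[lb_b ub_b] /andP[lb_a ub_a].
rewrite -[K%:R^-1]mulr1 ltr_pdivlMl // -[X in X * _]ger0_norm ?ltW // -normrM.
rewrite mulrBr ltr_norml.
by move: (K%:R * a) (K%:R * b) lb_b ub_b lb_a ub_a => x y *; apply/andP; split; lra.
Qed.

Lemma dirichlet_approx (R : realType) m (K : nat) (y : 'rV[R]_m) : (0 < K)%N ->
  exists g : int, exists h : 'rV[int]_m,
    (0 < absz g <= K ^ m)%N /\ forall i, `|y 0 i *~ g - (h 0 i)%:~R| < K%:R^-1.
Proof.
move=> K_gt0; pose fl (j : nat) i := Num.floor (j%:R * y 0 i).
pose frac (j : nat) i := j%:R * y 0 i - (fl j i)%:~R.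
have frac_itv j i : 0 <= frac j i < 1.
  by have := floor_itv (j%:R * y 0 i); rewrite /frac intrD; lra.
have box_lt j i : (Num.truncn (K%:R * frac j i) < K)%N.
  have /andP[frac_ge0 frac_lt1] := frac_itv j i.
  by rewrite truncn_lt_nat ?mulr_ge0 // -[X in _ < X]mulr1 ltr_pM2l ?ltr0n.
pose box (j : 'I_(K ^ m).+1) : {ffun 'I_m -> 'I_K} := [ffun i => Ordinal (box_lt j i)].
have /injectivePn [j1 [j2 neq_j eq_box]] : ~~ injectiveb box.
  apply: contraT => /negPn /injectiveP /leq_card.
  by rewrite card_ffun !card_ord ltnn.
exists ((j1 : nat)%:Z - (j2 : nat)%:Z), (\row_i (fl j1 i - fl j2 i)).
split.
  have := ltn_ord j1; have := ltn_ord j2; move: neq_j; rewrite -val_eqE /=.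
  by move: (j1 : nat) (j2 : nat) => u v; move: (K ^ m)%N => N; lia.
move=> i; have := congr1 (fun f : {ffun 'I_m -> 'I_K} => (f i : nat)) eq_box.
rewrite !ffunE /= => /(frac_box_close K_gt0 (frac_itv j1 i) (frac_itv j2 i)) close.
rewrite [X in `|X|](_ : _ = frac j1 i - frac j2 i) //.
by rewrite /frac mxE -mulrzr !intrB -!pmulrn; ring.
Qed.

Lemma int_span_sandwich (R : pzRingType) m (L : set 'rV[R]_m) (G : 'M[R]_m) (E : nat) :
  addgroup L -> (0 < E)%N -> (forall i, row i G *+ E \in L) -> L `<=` int_span G ->
  exists k (K : 'M[int]_(m + k, m)), L = int_span (map_mx intr K *m G).
Proof.
move=> gL E_gt0 LEG subL; pose F := {ffun 'I_m -> 'I_E}.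
pose digits (c : F) : 'rV[int]_m := \row_i (c i : nat)%:Z.
(* L is generated by the rows of E G and by those digit vectors c G, with digits
   in [0, E), that lie in L. *)
pose gen (c : F) := if map_mx intr (digits c) *m G \in L then digits c else 0.
exists #|F|, (col_mx (E%:Z)%:M (\matrix_(k < #|F|) gen (enum_val k))).
have LEspan : int_span (G *+ E) `<=` L.
  apply: int_span_sub => // i.
  suff -> : row i (G *+ E) = row i G *+ E by [].
  by apply/rowP => j; rewrite mulmxnE !mxE mulmxnE.
apply/seteqP; split => [x Lx | _ [a _ <-]].
- have [h _ eq_x] := subL _ Lx.
  have mod_lt i : (absz (h ord0 i %% E)%Z < E)%N.
    by rewrite -ltz_nat gez0_abs ?modz_ge0 ?ltz_pmod //; lia.
  pose q := \row_i (h ord0 i %/ E)%Z; pose c : F := [ffun i => Ordinal (mod_lt i)].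
  have eq_h : h = q *~ E + digits c.
    apply/rowP => i; rewrite !mxE ffunE /= -pmulrn mulmxnE mxE pmulrn mulrzz.
    by rewrite gez0_abs ?modz_ge0 -?divz_eq //; lia.
  have LqE : map_mx intr (q *~ E) *m G \in L.
    rewrite in_setE; apply: LEspan; exists q => //.
    by rewrite raddfMz /= -scaler_int -scalemxAl scaler_int -pmulrn; apply: raddfMn.
  have Lc : map_mx intr (digits c) *m G \in L.
    have -> : digits c = h - q *~ E by rewrite eq_h addrAC subrr add0r.
    by rewrite raddfB mulmxBl eq_x; apply: addgroupB => //; rewrite in_setE.
  exists (row_mx q (delta_mx 0 (enum_rank c))) => //.
  rewrite map_intr_mulmxA mul_row_col mul_mx_scalar -rowE rowK enum_rankK /gen Lc.
  by rewrite -[X in X *: q]intz scaler_int -eq_h eq_x.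
- apply: (int_span_sub gL); last by exists a.
  move=> i; rewrite row_mul -map_row; case: (split_ordP i) => j ->.
    rewrite rowKu rowE mul_mx_scalar -[X in X *: _]intz scaler_int raddfMz /=.
    by rewrite map_delta_mx -scaler_int -scalemxAl scaler_int -rowE -pmulrn LEG.
  rewrite rowKd rowK /gen; case: ifP => // _.
  by rewrite raddf0 mul0mx addgroup0.
Qed.

Section DiscreteSubgroup.
Variables (R : realType) (m : nat) (L : set 'rV[R]_m) (r : R) (B : 'M[R]_m).
Hypotheses (gL : addgroup L) (r_gt0 : 0 < r).
Hypothesis discL : forall v, v \in L -> norm2 v < r -> v = 0.
Hypotheses (LB : forall i, row i B \in L) (uB : B \in unitmx).

Lemma discrete_coord_eq0 : exists2 K : nat, (0 < K)%N &
  forall d : 'rV[R]_m, (forall i, `|d 0 i| < K%:R^-1) -> d *m B \in L -> d = 0.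
Proof.
set S := \sum_i \sum_j `|B i j|.
have S_ge0 : 0 <= S by rewrite !sumr_ge0 // => i _; rewrite sumr_ge0.
pose K := (Num.truncn (m%:R * S / r)).+1.
have K_gt0 : 0 < K%:R :> R by rewrite ltr0n.
exists K => // d small_d Ld.
have : norm2 (d *m B) < r.
  apply: le_lt_trans (norm2_le_coord (b := K%:R^-1 * S) _) _.
    by apply: mulmx_entry_le => i; apply: ltW.
  rewrite mulrCA ltr_pdivrMl // -ltr_pdivrMr //; exact: truncnS_gt.
move=> /(discL Ld)/(congr1 (mulmx^~ (invmx B))).
by rewrite mulmxK // mul0mx.
Qed.

Lemma discrete_sub_int_span : exists2 E : nat, (0 < E)%N & L `<=` int_span (E%:R^-1 *: B).
Proof.
have [K K_gt0 coord_eq0] := discrete_coord_eq0.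
(* Every denominator is at most K ^ m, hence divides (K ^ m)`!. *)
exists (K ^ m)`!; first exact: fact_gt0.
move=> x Lx; pose y := x *m invmx B.
have [g [h [g_bound close_h]]] := dirichlet_approx y K_gt0.
have eq_gh : y *~ g = map_mx intr h.
  apply/eqP; rewrite -subr_eq0; apply/eqP/coord_eq0.
    by move=> i; rewrite !mxE -scaler_int mxE mulrzl.
  rewrite mulmxBl -scaler_int -scalemxAl mulmxKV // scaler_int.
  apply: (addgroupB gL); first by apply: (addgroupMz gL); rewrite in_setE.
  by rewrite in_setE; apply: (int_span_sub gL LB); exists h.
have /dvdnP [q eq_q] : (absz g %| (K ^ m)`!)%N by rewrite dvdn_fact.
exists (h *~ (q%:Z * sgz g)) => //.
rewrite raddfMz /= -eq_gh -mulrzA (mulrC g) -mulrA -abszEsg -PoszM -eq_q.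
rewrite -pmulrn -scaler_nat -scalemxAl scalemxAr scalerA mulfV ?scale1r ?mulmxKV //.
by rewrite pnatr_eq0 -lt0n fact_gt0.
Qed.

End DiscreteSubgroup.

Lemma lattice_int_basis (R : realType) m (L : set 'rV[R]_m) :
  is_lattice L -> exists2 W : 'M[R]_m, W \in unitmx & L = int_span W.
Proof.
case=> L0 L_subr [r r_gt0 discL] [B [LB uB]]; have gL : addgroup L by split.
have [E E_gt0 subL] := discrete_sub_int_span gL r_gt0 discL LB uB.
have LEB i : row i (E%:R^-1 *: B) *+ E \in L.
  by rewrite -scaler_nat -linearZ scalerA mulfV ?scale1r ?LB // pnatr_eq0 -lt0n.
have [k [K eqK]] := int_span_sandwich gL E_gt0 LEB subL.
have [Z eqZ] := int_span_square K (E%:R^-1 *: B).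
set W := map_mx intr Z *m _ in eqZ; exists W; last by rewrite eqK.
have [Y eqB] : exists Y : 'M[int]_m, B = map_mx intr Y *m W.
  by apply: int_span_rows => i; rewrite -eqZ -eqK -in_setE.
by move: uB; rewrite eqB !unitmxE det_mulmx unitrM => /andP[].
Qed.

Lemma int_span_bounded_finite (R : realType) m (W : 'M[R]_m) (rho : R) : W \in unitmx ->
  exists (F : finType) (f : F -> 'rV[R]_m), (forall c, int_span W (f c)) /\
    forall v, int_span W v -> norm2 v <= rho -> exists c, f c = v.
Proof.
move=> uW; pose M := Num.truncn (rho * \sum_i \sum_j `|invmx W i j|).
pose coords (c : {ffun 'I_m -> 'I_(M + M).+1}) := \row_i ((c i : nat)%:Z - M%:Z).
exists _, (fun c => map_mx intr (coords c) *m W).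
split=> [c | _ [a _ <-] le_rho]; first by exists (coords c).
have a_lt i : `|a ord0 i| < M.+1%:Z.
  rewrite -(ltr_int R) intr_norm; apply: le_lt_trans (truncnS_gt _).
  have -> : (a ord0 i)%:~R = (map_mx intr a *m W *m invmx W) ord0 i :> R.
    by rewrite mulmxK // mxE.
  by apply: mulmx_entry_le => j; apply: le_trans le_rho; apply: coord_le_norm2.
have digit_lt i : (absz (a ord0 i + M%:Z)%R < (M + M).+1)%N by have := a_lt i; lia.
exists [ffun i => Ordinal (digit_lt i)]; congr (map_mx _ _ *m _).
by apply/rowP => i; rewrite !mxE ffunE /= -[a 0 i]/(a ord0 i); have := a_lt i; lia.
Qed.

Lemma int_span_shortest (R : realType) m (W : 'M[R]_m) : (0 < m)%N -> W \in unitmx ->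
  exists v, [/\ int_span W v, v != 0 &
                forall w, int_span W w -> w != 0 -> norm2 v <= norm2 w].
Proof.
move=> m_gt0 uW; pose w0 := row (Ordinal m_gt0) W.
have w0_neq0 : w0 != 0.
  apply/eqP => /(congr1 (mulmx^~ (invmx W))); rewrite /w0 rowE mulmxK // mul0mx.
  by move/matrixP/(_ 0 (Ordinal m_gt0)); rewrite !mxE !eqxx => /eqP; rewrite oner_eq0.
have [F [f [span_f f_onto]]] := int_span_bounded_finite (norm2 w0) uW.
have [c0 eq_c0] := f_onto _ (int_span_row W _) (lexx _).
have f_c0 : f c0 != 0 by rewrite eq_c0.
case: (@arg_minP _ _ _ c0 (fun c => f c != 0) (fun c => norm2 (f c)) f_c0) => c f_c min_c.
exists (f c); split; [exact: span_f | exact: f_c | move=> w span_w w_neq0].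
case: (lerP (norm2 w) (norm2 w0)) => [le_w | /ltW].
  by have [c' eq_c'] := f_onto _ span_w le_w; rewrite -eq_c'; apply: min_c; rewrite eq_c'.
by apply: le_trans; rewrite /w0 -eq_c0; apply: min_c.
Qed.

Lemma ell_shortest (R : realType) m (L : set 'rV[R]_m) v : v \in L -> v != 0 ->
  (forall w, w \in L -> w != 0 -> norm2 v <= norm2 w) -> ell L = norm2 v.
Proof.
move=> Lv v_neq0 v_min.
have v_lb : lbound [set norm2 w | w in [set w | w \in L /\ w != 0]] (norm2 v).
  by move=> _ [w [Lw w_neq0] <-]; apply: v_min.
apply/eqP; rewrite eq_le; apply/andP; split.
  by apply: (ge_inf (ex_intro _ _ v_lb)); exists v.
by apply: lb_le_inf => //; exists (norm2 v), v.
Qed.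

Lemma CO_scaling (R : realType) m (T : 'M[R]_m) : CO T ->
  exists2 c : R, 0 < c & (forall v, norm2 (v *m T) = c * norm2 v) /\ `|\det T| = c ^+ m.
Proof.
case=> c [Q [c_gt0 QQT ->]]; exists c => //; split => [v|].
  by rewrite -scalemxAr norm2Z norm2_orthogonal // gtr0_norm.
rewrite detZ normrM normrX gtr0_norm //; suff -> : `|\det Q| = 1 by rewrite mulr1.
have : \det Q ^+ 2 = 1 by rewrite expr2 -{2}det_tr -det_mulmx QQT det1.
by move/eqP; rewrite sqr_norm_eq1 => /eqP.
Qed.

Lemma inv_scale_in_N_set (R : realType) m (L : set 'rV[R]_m) (T : 'M[R]_m) c v0 :
  0 < c -> (forall v, norm2 (v *m T) = c * norm2 v) -> L `<=` lin_image T L ->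
  v0 \in L -> v0 != 0 -> (forall w, w \in L -> w != 0 -> norm2 v0 <= norm2 w) ->
  (c ^+ m)^-1 \in N_set L.
Proof.
move=> c_gt0 normT LTL Lv0 v0_neq0 v0_min.
have [u0 Lu0 eq_u0] := LTL _ (set_mem Lv0).
have u0_neq0 : u0 != 0 by apply: contraNneq v0_neq0 => u0_eq0; rewrite -eq_u0 u0_eq0 mul0mx.
have ell_eq := ell_shortest Lv0 v0_neq0 v0_min.
have ell_gt0 : 0 < ell L by rewrite ell_eq norm2_gt0.
rewrite in_setE; exists ((ell L)^-1 *: u0).
  by split; [rewrite in_setE; exists u0 | rewrite scaler_eq0 negb_or invr_eq0 gt_eqF].
rewrite norm2Z gtr0_norm ?invr_gt0 // ell_eq -eq_u0 normT invfM mulfVK ?exprVn //.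
by rewrite gt_eqF ?norm2_gt0.
Qed.

Unset Implicit Arguments.

Theorem lemma4p7 (R : realType) (m : nat) (L : set 'rV[R]_m)
    (C : set (set 'rV[R]_m)) :
  (0 < m)%N -> is_lattice L -> lattice_code L C ->
  exists n : nat, (C #= `I_n)%card /\ (n%:R : R) \in N_set L.
Proof.
move=> m_gt0 latL [T CO_T [LTL ->]].
have [W uW eqL] := lattice_int_basis latL.
have [c c_gt0 [normT detT]] := CO_scaling CO_T.
have cm_neq0 : c ^+ m != 0 by rewrite expf_neq0 ?gt_eqF.
have uT : T \in unitmx by rewrite unitmxE unitfE -normr_eq0 detT.
have [|n card_n n_detT] := int_span_index_mulmx uW uT.
  by rewrite -lin_image_int_span -eqL.
exists n; split; first by rewrite eqL lin_image_int_span.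
have -> : n%:R = (c ^+ m)^-1 :> R by apply: (mulIf cm_neq0); rewrite mulVf // -detT.
have [v0 [span_v0 v0_neq0 v0_min]] := int_span_shortest m_gt0 uW.
apply: (inv_scale_in_N_set c_gt0 normT LTL _ v0_neq0); first by rewrite eqL in_setE.
by move=> w; rewrite eqL in_setE; apply: v0_min.
Qed.
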